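(* There is an absolute constant $C$ such that for all positive integers $n$, $\mathrm{sf}(\Lambda(R\cup L))\le 2^{Cn}\, s(\lfloor0.15n\rfloor)^{0.8n}$.
   Context: $R=\{(x,y)\in\mathbb{R}^2:0.7n\le x+y\le n,\ |x-y|\le0.8n\}$, $L=\{(x,y)\in\mathbb{R}^2:2\lceil0.7n\rceil\le x+y\le1.7n,\ |x-y|\le0.4n\}$, $\Lambda(X)=\mathbb{Z}^2\cap X$. $\mathrm{sf}(Y)$ is the number of sum-free subsets of $Y$ (no $a,b,c$, not necessarily distinct, with $a+b=c$, coordinatewise addition). For $m\ge 0$, $s(m)=\mathrm{sf}(\{1,3,4\}\times[m])$ where $[m]=\{1,\dots,m\}$, viewed as a subset of $\mathbb{Z}^2$. *)

From Stdlib Require Import Reals.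
From mathcomp Require Import all_boot all_algebra.
Set Implicit Arguments. Unset Strict Implicit. Unset Printing Implicit Defensive.
Import GRing.Theory Num.Theory.

Local Open Scope ring_scope.

Definition pt := (int * int)%type.
Definition padd (p q : pt) : pt := (p.1 + q.1, p.2 + q.2).

Definition sumfree (s : seq pt) (A : {set seq_sub s}) : bool :=
  [forall a in A, forall b in A, forall c in A, padd (val a) (val b) != val c].

Definition sf (s : seq pt) : nat := #|[set A : {set seq_sub s} | sumfree A]|.

Definition ceil07 (n : nat) : nat := ((7 * n + 9) %/ 10)%N.

(* membership in R = {0.7n <= x+y <= n, |x-y| <= 0.8n}, cleared of denominators *)
Definition inR (n : nat) (p : pt) : bool :=
  [&& (7 * n)%:Z <= 10 * (p.1 + p.2), 10 * (p.1 + p.2) <= (10 * n)%:Z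
    & 10 * `|p.1 - p.2| <= (8 * n)%:Z].

(* membership in L = {2*ceil(0.7n) <= x+y <= 1.7n, |x-y| <= 0.4n} *)
Definition inL (n : nat) (p : pt) : bool :=
  [&& (2 * ceil07 n)%:Z <= p.1 + p.2, 10 * (p.1 + p.2) <= (17 * n)%:Z
    & 10 * `|p.1 - p.2| <= (4 * n)%:Z].

(* The box [-n, 2n]^2 of integer points; it contains R and L
   (R lies in [-0.05n, 0.9n]^2, L lies in [0.15n, 1.05n]^2). *)
Definition box (n : nat) : seq int := [seq k%:Z - n%:Z | k <- iota 0 (3 * n).+1].

Definition LambdaRL (n : nat) : seq pt :=
  [seq p <- [seq (x, y) | x <- box n, y <- box n] | inR n p || inL n p].

Definition s_fun (m : nat) : nat :=
  sf [seq ((i%:Z, j%:Z) : pt) | i <- [:: 1; 3; 4]%N, j <- iota 1 m].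

(* Cut Lambda(R u L) into about 0.8n fibres, each made of two diagonals
   [x - y = d1], [x - y = d3] of R and the diagonal [x - y = d1 + d3] of L.
   Translating these three diagonals to rows 1, 3 and 4 of {1,3,4} x Z, each
   starting at abscissa 1, embeds a fibre into {1,3,4} x [0.15n + 4] by an
   injection that reflects sums (a sum of rows is a row only for 1 + 3 = 4),
   so a fibre has at most s(0.15n + 4) <= 2^12 s(0.15n) sum-free subsets.  A
   sum-free subset of a union restricts to sum-free subsets of the parts, hence
   sf(Lambda(R u L)) <= (2^12 s(0.15n))^(#fibres); the few fibres beyond 0.8n
   are paid for by the trivial bound s(m) <= 2^(3m). *)

From Stdlib Require Import Reals Lra.
From mathcomp Require Import all_boot all_algebra zify.
Set Implicit Arguments. Unset Strict Implicit. Unset Printing Implicit Defensive.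
Import GRing.Theory Num.Theory.

Section SumFreeTransfer.
Variables (s t : seq pt) (f : pt -> pt).

Definition sf_image (A : {set seq_sub s}) : {set seq_sub t} :=
  [set y | [exists x in A, val y == f (val x)]].

Hypothesis f_inj : {in s &, injective f}.

Lemma mem_sf_image (A : {set seq_sub s}) (x : seq_sub s) (fx_t : f (val x) \in t) :
  (SeqSub fx_t \in sf_image A) = (x \in A).
Proof.
rewrite inE; apply/existsP/idP => [[x' /andP[x'A /eqP /= fx'x]]|xA].
  have /val_inj <- : val x' = val x by apply: f_inj => //; apply: ssvalP.
  exact: x'A.
by exists x; rewrite xA /=.
Qed.

Hypothesis f_reflects_sums :
  {in s & s, forall a b, {in s, forall c, padd (f a) (f b) = f c -> padd a b = c}}.

Lemma sumfree_sf_image (A : {set seq_sub s}) : sumfree A -> sumfree (sf_image A).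
Proof.
move=> /forall_inP sfA; apply/forall_inP => a' /[!inE] /existsP[a /andP[aA /eqP ->]].
apply/forall_inP => b' /[!inE] /existsP[b /andP[bA /eqP ->]].
apply/forall_inP => c' /[!inE] /existsP[c /andP[cA /eqP ->]].
apply/eqP => /(f_reflects_sums (ssvalP a) (ssvalP b) (ssvalP c)) /eqP.
by move: (sfA a aA) => /forall_inP /(_ b bA) /forall_inP /(_ c cA) /negP.
Qed.

Lemma sf_image_inj : {in s, forall x, f x \in t} -> injective sf_image.
Proof.
move=> f_t A B eqAB; apply/setP => x.
by rewrite -(mem_sf_image A (f_t _ (ssvalP x))) eqAB mem_sf_image.
Qed.

End SumFreeTransfer.

Lemma sf_le_reflect_sums (s t : seq pt) (f : pt -> pt) :
  {in s &, injective f} -> {in s, forall x, f x \in t} ->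
  {in s & s, forall a b, {in s, forall c, padd (f a) (f b) = f c -> padd a b = c}} ->
  (sf s <= sf t)%N.
Proof.
move=> f_inj f_t f_refl; rewrite /sf -(card_imset _ (sf_image_inj f_inj f_t)).
apply: subset_leq_card; apply/subsetP => _ /imsetP[A /[!inE] sfA ->].
exact: sumfree_sf_image.
Qed.

Lemma sf_subset (s t : seq pt) : {subset s <= t} -> (sf s <= sf t)%N.
Proof. by move=> st; apply: (@sf_le_reflect_sums s t id) => // a b _ _ c. Qed.

Lemma sf_le_mul (s t1 t2 : seq pt) :
  {subset s <= t1 ++ t2} -> (sf s <= sf t1 * sf t2)%N.
Proof.
move=> s_t; rewrite /sf -cardsX.
have id_inj : {in s &, injective (@id pt)} by [].
pose restr A := (@sf_image s t1 id A, @sf_image s t2 id A).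
have restr_inj : injective restr.
  move=> A B [eq1 eq2]; apply/setP => x.
  have := s_t _ (ssvalP x); rewrite mem_cat => /orP[x_t|x_t].
    by rewrite -(mem_sf_image id_inj A x_t) eq1 mem_sf_image.
  by rewrite -(mem_sf_image id_inj A x_t) eq2 mem_sf_image.
rewrite -(card_imset _ restr_inj); apply: subset_leq_card; apply/subsetP.
have id_refl : {in s & s, forall a b, {in s, forall c, padd a b = c -> padd a b = c}}.
  by move=> a b _ _ c.
by move=> _ /imsetP[A /[!inE] sfA ->]; rewrite !(sumfree_sf_image _ id_refl).
Qed.

Lemma sf_le_exp2size (s : seq pt) : (sf s <= 2 ^ size s)%N.
Proof.
apply: (leq_trans (sf_subset (t := undup s) _)) => [x|]; first by rewrite mem_undup.
rewrite /sf (leq_trans (subset_leq_card (subsetT _))) //.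
rewrite -powersetT card_powerset cardsT card_seq_sub ?undup_uniq //.
by rewrite leq_exp2l // size_undup.
Qed.

Lemma sf_gt0 (s : seq pt) : (0 < sf s)%N.
Proof.
rewrite card_gt0; apply/set0Pn; exists set0; rewrite inE.
by apply/forall_inP => a; rewrite inE.
Qed.

Lemma sf_le_cover (s : seq pt) (ss : seq (seq pt)) (B : nat) :
  {subset s <= flatten ss} -> {in ss, forall t, sf t <= B}%N ->
  (sf s <= B ^ size ss)%N.
Proof.
elim: ss s => [|t ss IH] s s_ss sf_ss /=.
  by case: s s_ss => [|x s] s_nil; [exact: sf_le_exp2size | have := s_nil x (mem_head _ _)].
rewrite expnS (leq_trans (sf_le_mul s_ss)) // leq_mul ?sf_ss ?mem_head //.
by apply: IH => // u u_ss; apply: sf_ss; rewrite inE u_ss orbT.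
Qed.

Local Open Scope ring_scope.

Lemma s_fun_addn_le m k : (s_fun (m + k) <= s_fun m * 2 ^ (3 * k))%N.
Proof.
set bot := [seq ((i%:Z, j%:Z) : pt) | i <- [:: 1; 3; 4]%N, j <- iota 1 m].
set top := [seq ((i%:Z, j%:Z) : pt) | i <- [:: 1; 3; 4]%N, j <- iota m.+1 k].
apply: (@leq_trans (sf bot * sf top)).
  apply: sf_le_mul => _ /allpairsP[[i j] [/= i_lab j_range ->]].
  rewrite mem_iota in j_range; rewrite mem_cat.
  case: (leqP j m) => j_m; apply/orP; [left | right]; apply/allpairsP;
    by exists (i, j); split=> //=; rewrite mem_iota; lia.
by rewrite leq_mul2l (leq_trans (sf_le_exp2size _)) ?size_allpairs ?size_iota ?orbT.
Qed.

Section Fibres.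
Variable n : nat.
Hypothesis n_gt0 : (0 < n)%N.

Definition pdiff (p : pt) : int := p.1 - p.2.

Lemma inR_inL_disjoint (p : pt) : inR n p -> ~~ inL n p.
Proof. by case: p => x y; rewrite /inR /inL /ceil07 /=; lia. Qed.

Definition on_fibre (d1 d3 : int) (p : pt) : bool :=
  (inR n p && ((pdiff p == d1) || (pdiff p == d3))) || (inL n p && (pdiff p == d1 + d3)).

Definition fibre (d1 d3 : int) : seq pt := [seq p <- LambdaRL n | on_fibre d1 d3 p].

(* Rounded-down smallest abscissa of a point of R on the diagonal [x - y = d]. *)
Definition diag_base (d : int) : int := (((7 * n)%:Z + 10 * d) %/ 20)%Z.

(* Points of the fibre are sent to rows 1 and 3 (the two diagonals of R) and
   row 4 (the diagonal of L); the shift on row 4 is the sum of the shifts on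
   rows 1 and 3, so the map is additive on the triples with rows 1 + 3 = 4. *)
Definition fibre_embed (d1 d3 : int) (p : pt) : pt :=
  if inR n p then
    if pdiff p == d1 then (1, p.1 - diag_base d1 + 1) else (3, p.1 - diag_base d3 + 1)
  else (4, p.1 - diag_base d1 - diag_base d3 + 2).

Variant fibre_spec (d1 d3 : int) (p : pt) : Prop :=
  | FibreRow1 of inR n p & pdiff p = d1 & fibre_embed d1 d3 p = (1, p.1 - diag_base d1 + 1)
  | FibreRow3 of inR n p & pdiff p = d3 & fibre_embed d1 d3 p = (3, p.1 - diag_base d3 + 1)
  | FibreRow4 of inL n p & pdiff p = d1 + d3 &
      fibre_embed d1 d3 p = (4, p.1 - diag_base d1 - diag_base d3 + 2).

Lemma fibreP d1 d3 p : p \in fibre d1 d3 -> fibre_spec d1 d3 p.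
Proof.
rewrite mem_filter /on_fibre => /andP[+ _].
case/orP=> [/andP[p_R /orP[] /eqP p_d] | /andP[p_L /eqP p_d]].
- by apply: FibreRow1; rewrite // /fibre_embed p_R p_d eqxx.
- have [p_d1 | p_nd1] := eqVneq (pdiff p) d1.
    by apply: FibreRow1; rewrite // /fibre_embed p_R p_d1 eqxx.
  by apply: FibreRow3; rewrite // /fibre_embed p_R (negPf p_nd1).
have /negPf p_R : ~~ inR n p by apply: contraL p_L; apply: inR_inL_disjoint.
by apply: FibreRow4; rewrite // /fibre_embed p_R.
Qed.

Lemma mem_fibre_row1 d1 d3 p :
  p \in LambdaRL n -> inR n p -> pdiff p = d1 -> p \in fibre d1 d3.
Proof. by move=> p_Lam p_R p_d; rewrite mem_filter p_Lam /on_fibre p_R p_d eqxx. Qed.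

Lemma mem_fibre_row3 d1 d3 p :
  p \in LambdaRL n -> inR n p -> pdiff p = d3 -> p \in fibre d1 d3.
Proof. by move=> p_Lam p_R p_d; rewrite mem_filter p_Lam /on_fibre p_R p_d eqxx orbT. Qed.

Lemma mem_fibre_row4 d1 d3 p :
  p \in LambdaRL n -> inL n p -> pdiff p = d1 + d3 -> p \in fibre d1 d3.
Proof. by move=> p_Lam p_L p_d; rewrite mem_filter p_Lam /on_fibre p_L p_d eqxx orbT. Qed.

Lemma fibre_embed_inj d1 d3 : {in fibre d1 d3 &, injective (fibre_embed d1 d3)}.
Proof.
move=> [xa ya] [xb yb] /fibreP[] _ + -> /fibreP[] _ + ->; rewrite /pdiff /=;
  by move=> da db [] *; congr pair; lia.
Qed.

Lemma fibre_embed_reflects_sums d1 d3 :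
  {in fibre d1 d3 & fibre d1 d3, forall a b, {in fibre d1 d3, forall c,
    padd (fibre_embed d1 d3 a) (fibre_embed d1 d3 b) = fibre_embed d1 d3 c ->
    padd a b = c}}.
Proof.
move=> [xa ya] [xb yb] /fibreP[] _ + -> /fibreP[] _ + -> [xc yc] /fibreP[] _ + ->;
  rewrite /pdiff /padd /= => da db dc [] *; congr pair; lia.
Qed.

Lemma fibre_embed_range d1 d3 :
  {in fibre d1 d3, forall p, fibre_embed d1 d3 p \in
    [seq ((i%:Z, j%:Z) : pt) | i <- [:: 1; 3; 4]%N, j <- iota 1 (15 * n %/ 100 + 4)]}.
Proof.
move=> [x y] /fibreP[] p_RL p_d ->; apply/allpairsP;
  move: p_RL p_d; rewrite /inR /inL /ceil07 /pdiff /= => p_RL p_d.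
- by exists (1%N, absz (x - diag_base d1 + 1)); rewrite /diag_base mem_iota /=;
    split=> //; [lia | congr pair; lia].
- by exists (3%N, absz (x - diag_base d3 + 1)); rewrite /diag_base mem_iota /=;
    split=> //; [lia | congr pair; lia].
by exists (4%N, absz (x - diag_base d1 - diag_base d3 + 2)); rewrite /diag_base mem_iota /=;
  split=> //; [lia | congr pair; lia].
Qed.

Lemma sf_fibre_le d1 d3 : (sf (fibre d1 d3) <= s_fun (15 * n %/ 100) * 2 ^ 12)%N.
Proof.
apply: leq_trans (s_fun_addn_le _ 4); rewrite /s_fun.
apply: (@sf_le_reflect_sums _ _ (fibre_embed d1 d3)).
- exact: fibre_embed_inj.
- exact: fibre_embed_range.
exact: fibre_embed_reflects_sums.
Qed.

End Fibres.

Section Cover.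
Variable n : nat.
Hypothesis n_gt0 : (0 < n)%N.

Definition ceil04 : nat := ((4 * n + 9) %/ 10)%N.

(* The diagonals of R are [x - y = d] with [|d| <= 2K], those of L have
   [|d| <= K], where [K = ceil04].  For [t <= K], the fibres [A t] pair
   [K + t] with [t - 2K] and those of [B t] pair [t - K] with [t + 1]: together
   they use every diagonal of R, and their sums [2t - K], [2t - K + 1] run
   over every diagonal of L. *)
Definition fibres : seq (seq pt) :=
  [seq fibre n (ceil04%:Z + t%:Z) (t%:Z - 2 * ceil04%:Z) | t <- iota 0 ceil04.+1] ++
  [seq fibre n (t%:Z - ceil04%:Z) (t%:Z + 1) | t <- iota 0 ceil04.+1].

Lemma LambdaRL_sub_fibres : {subset LambdaRL n <= flatten fibres}.
Proof.
move=> p p_Lam; rewrite flatten_cat mem_cat.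
have /andP[/orP[p_R|p_L] _] :
    (inR n p || inL n p) && (p \in [seq (x, y) | x <- box n, y <- box n]).
  by move: p_Lam; rewrite mem_filter.
- have p_d : `|pdiff p| <= 2 * ceil04%:Z.
    by move: p_R; case: p {p_Lam} => x y; rewrite /inR /pdiff /ceil04 /=; lia.
  apply/orP.
  have [[p_hi | p_lo] | [p_neg | p_pos]] :
    (ceil04%:Z <= pdiff p \/ pdiff p <= - ceil04%:Z) \/
    (- ceil04%:Z <= pdiff p <= 0 \/ 1 <= pdiff p <= ceil04%:Z) by lia.
  + left; apply/flatten_mapP; exists (absz (pdiff p - ceil04%:Z)).
      by rewrite mem_iota; lia.
    by apply: mem_fibre_row1 => //; lia.
  + left; apply/flatten_mapP; exists (absz (pdiff p + 2 * ceil04%:Z)).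
      by rewrite mem_iota; lia.
    by apply: mem_fibre_row3 => //; lia.
  + right; apply/flatten_mapP; exists (absz (pdiff p + ceil04%:Z)).
      by rewrite mem_iota; lia.
    by apply: mem_fibre_row1 => //; lia.
  + right; apply/flatten_mapP; exists (absz (pdiff p - 1)).
      by rewrite mem_iota; lia.
    by apply: mem_fibre_row3 => //; lia.
have p_d : `|pdiff p| <= ceil04%:Z.
  by move: p_L; case: p {p_Lam} => x y; rewrite /inL /pdiff /ceil04 /=; lia.
set t := absz ((pdiff p + ceil04%:Z) %/ 2)%Z.
have t_range : (t \in iota 0 ceil04.+1) by rewrite mem_iota; lia.
have [p_even | p_odd] :
  ((pdiff p + ceil04%:Z) %% 2)%Z = 0 \/ ((pdiff p + ceil04%:Z) %% 2)%Z = 1 by lia.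
  apply/orP; left; apply/flatten_mapP; exists t => //.
  by apply: mem_fibre_row4 => //; lia.
apply/orP; right; apply/flatten_mapP; exists t => //.
by apply: mem_fibre_row4 => //; lia.
Qed.

Lemma size_fibres : size fibres = (2 * ceil04.+1)%N.
Proof. by rewrite size_cat !size_map size_iota addnn mul2n. Qed.

Lemma sf_LambdaRL_le_fibres :
  (sf (LambdaRL n) <= (s_fun (15 * n %/ 100) * 2 ^ 12) ^ (2 * ceil04.+1))%N.
Proof.
rewrite -size_fibres; apply: sf_le_cover LambdaRL_sub_fibres _.
by move=> _ /[!mem_cat] /orP[] /mapP[t _ ->]; apply: sf_fibre_le.
Qed.

End Cover.

Lemma s_fun_le_exp2 m : (s_fun m <= 2 ^ (3 * m))%N.
Proof. by rewrite (leq_trans (sf_le_exp2size _)) // size_allpairs size_iota. Qed.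

Lemma sf_LambdaRL_le (n : nat) : (0 < n)%N ->
  (sf (LambdaRL n) <= 2 ^ (100 * n) * s_fun (15 * n %/ 100) ^ (2 * ceil04 n - 2))%N.
Proof.
move=> n_gt0; set m := (15 * n %/ 100)%N; set k := (2 * ceil04 n - 2)%N.
have N_eq : (2 * (ceil04 n).+1 = k + 4)%N by rewrite /k /ceil04; lia.
have q4_le : (s_fun m ^ 4 <= 2 ^ (12 * m))%N.
  have -> : (12 * m = 3 * m * 4)%N by lia.
  by rewrite expnM leq_exp2r ?s_fun_le_exp2.
apply: leq_trans (sf_LambdaRL_le_fibres n_gt0) _.
rewrite N_eq expnMn expnD -mulnA mulnC leq_mul2r; apply/orP; right.
apply: leq_trans (leq_mul q4_le (leqnn _)) _.
by rewrite -expnM -expnD leq_exp2l //; rewrite /m /k /ceil04; lia.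
Qed.

Local Close Scope ring_scope.
Local Open Scope R_scope.

Lemma INR_expn (a k : nat) : INR (a ^ k)%N = INR a ^ k.
Proof. by elim: k => [|k IH] //=; rewrite expnS mult_INR IH. Qed.

Lemma pow_le_Rpower (q a : R) (k : nat) : 1 <= q -> INR k <= a -> q ^ k <= Rpower q a.
Proof. by move=> q_ge1 k_le; rewrite -Rpower_pow; [apply: Rle_Rpower | lra]. Qed.

Theorem mainTheorem9 :
  exists C : R, forall n : nat, (0 < n)%N ->
    Rle (INR (sf (LambdaRL n)))
        (Rmult (Rpower 2 (Rmult C (INR n)))
               (Rpower (INR (s_fun ((15 * n) %/ 100)%N)) (Rmult (8 / 10) (INR n))))%R.
Proof.
exists 100 => n n_gt0.
set q := s_fun _; set k := (2 * ceil04 n - 2)%N.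
have k_le : INR (10 * k) <= INR (8 * n) by apply/le_INR/leP; rewrite /k /ceil04; lia.
have q_ge1 : 1 <= INR q by apply/(le_INR 1)/leP/sf_gt0.
apply: Rle_trans (le_INR _ _ (leP (sf_LambdaRL_le n_gt0))) _.
rewrite -/q -/k mult_INR !INR_expn (_ : INR 2 = 2); last by rewrite /=; lra.
rewrite -Rpower_pow; last lra.
apply: Rmult_le_compat; [exact/Rlt_le/exp_pos | apply: pow_le; lra | | ].
  by apply: Rle_Rpower; rewrite ?mult_INR /=; lra.
by apply: pow_le_Rpower; rewrite ?mult_INR /= in k_le *; lra.
Qed.
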